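(* For $n\ge1$, as polynomial identities in the variables $x_1,\dots,x_{n+1}$ (the ratios being polynomials): (1) for $\nu\in W^{n+1}$, $$\left.\frac{\det(Q_{\nu_i}(x_j))_{i,j=1}^{n+1}}{\det(x_j^{i-1})_{i,j=1}^{n+1}}\right|_{x_1=0}=\frac{(-1)^n}{\lambda_0^n}\sum_{k\in W^{n,n+1}(\nu)}\prod_{i=1}^n\hat\pi_{k_i}\,\frac{\det(\hat Q_{k_i}(x_{j+1}))_{i,j=1}^n}{\det(x_{j+1}^{i-1})_{i,j=1}^n};$$ (2) for $\nu\in W^n$, $$\frac{\det(\hat Q_{\nu_i}(x_j))_{i,j=1}^n}{\det(x_j^{i-1})_{i,j=1}^n}=\sum_{k\in W^{n,n}(\nu)}\prod_{i=1}^n\pi_{k_i}\,\frac{\det(Q_{k_i}(x_j))_{i,j=1}^n}{\det(x_j^{i-1})_{i,j=1}^n}.$$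
   Context: Let $\lambda_k=\lambda(k)>0$ ($k\ge0$) and $\mu_k=\mu(k)$ with $\mu_0=0$, $\mu_k>0$ ($k\ge1$) be the rates of a birth and death chain on $\mathbb N=\{0,1,\dots\}$ reflecting at $0$, with $\pi_0=1$, $\pi_k=\prod_{i=1}^k\lambda_{i-1}/\mu_i$. Dual rates: $\hat\lambda_k=\mu_{k+1}$, $\hat\mu_k=\lambda_k$; $\hat\pi_0=1$, $\hat\pi_k=\prod_{i=1}^k\mu_i/\lambda_i$. Polynomials $Q_n,\hat Q_n$ (degree $n$) are defined by $Q_{-1}=\hat Q_{-1}=0$, $Q_0=\hat Q_0=1$ and, for $n\ge0$, $-xQ_n(x)=\mu_nQ_{n-1}(x)-(\lambda_n+\mu_n)Q_n(x)+\lambda_nQ_{n+1}(x)$ and $-x\hat Q_n(x)=\lambda_n\hat Q_{n-1}(x)-(\mu_{n+1}+\lambda_n)\hat Q_n(x)+\mu_{n+1}\hat Q_{n+1}(x)$. $W^n=\{\nu\in\mathbb N^n:\nu_1<\dots<\nu_n\}$; for $\nu\in W^{n+1}$, $W^{n,n+1}(\nu)=\{k\in W^n:\nu_1\le k_1<\nu_2\le k_2<\dots\le k_n<\nu_{n+1}\}$; for $\nu\in W^n$, $W^{n,n}(\nu)=\{k\in W^n:k_1\le\nu_1<k_2\le\nu_2<\dots<k_n\le\nu_n\}$. $\det(x_j^{i-1})_{i,j=1}^n=\prod_{i<j}(x_j-x_i)$. *)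

From HB Require Import structures.
From mathcomp Require Import all_boot all_order all_algebra.
Set Implicit Arguments. Unset Strict Implicit. Unset Printing Implicit Defensive.
Import Order.TTheory GRing.Theory Num.Theory.
Local Open Scope ring_scope.

Section BD.
Variable R : realFieldType.

(* QQ lam mu n = (Q_{n-1}, Q_n), with Q_{-1} = 0, Q_0 = 1 and
   lam_n Q_{n+1} = ((lam_n + mu_n) - X) Q_n - mu_n Q_{n-1}. *)
Fixpoint QQ (lam mu : nat -> R) (n : nat) : {poly R} * {poly R} :=
  match n with
  | 0 => (0, 1)
  | m.+1 => let (a, b) := QQ lam mu m in
            (b, (lam m)^-1 *: (((lam m + mu m)%:P - 'X) * b - mu m *: a))
  end.

Definition Qpol (lam mu : nat -> R) (n : nat) : {poly R} := (QQ lam mu n).2.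

Definition hatQpol (lam mu : nat -> R) (n : nat) : {poly R} :=
  Qpol (fun k => mu k.+1) lam n.

Definition piw (lam mu : nat -> R) (k : nat) : R :=
  \prod_(1 <= i < k.+1) (lam i.-1 / mu i).
Definition hatpiw (lam mu : nat -> R) (k : nat) : R :=
  \prod_(1 <= i < k.+1) (mu i / lam i).

Definition detratio (m : nat) (P : nat -> {poly R}) (nu : 'I_m -> nat)
    (x : 'I_m -> R) : R :=
  \det (\matrix_(i < m, j < m) (P (nu i)).[x j]) /
  \det (\matrix_(i < m, j < m) (x j ^+ i)).
End BD.

Definition inW (n : nat) (v : 'I_n -> nat) : bool :=
  [forall i : 'I_n, forall j : 'I_n, (i < j)%N ==> (v i < v j)%N].

Definition interlace_up (n : nat) (nu : 'I_n.+1 -> nat) (k : 'I_n -> nat) : bool :=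
  [forall i : 'I_n, (nu (widen_ord (leqnSn n) i) <= k i)%N && (k i < nu (lift ord0 i))%N].

Definition interlace_eq (n : nat) (nu : 'I_n -> nat) (k : 'I_n -> nat) : bool :=
  [forall i : 'I_n, (k i <= nu i)%N &&
     [forall j : 'I_n, (nat_of_ord j == (nat_of_ord i).+1) ==> (nu i < k j)%N]].

(* Summing the three-term recurrence with the weights pi_j gives
     pi_k lam_k (Q_(k+1) - Q_k) = - x (pi_0 Q_0 + ... + pi_k Q_k),
   and the partial sum on the right is the dual polynomial hatQ_k; as
   pi_k lam_k hatpi_k = lam_0, this reads Q_(k+1) - Q_k = -(hatpi_k / lam_0) x hatQ_k.
   Subtracting from each row of a determinant the previous row therefore turns
   the rows hatQ_(nu_i) of (2) into sums of pi_k Q_k over nu_(i-1) < k <= nu_i,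
   and the rows Q_(nu_i) of (1) into sums of -(hatpi_k / lam_0) x hatQ_k over
   nu_i <= k < nu_(i+1), except for the first row; multilinearity expands the
   determinant over one k_i per window, i.e. over the interlacing set.  In (1),
   Q_k(0) = 1 makes the first column (1, 0, ..., 0) after the row operations,
   and the factors x_(j+1) pulled out of the columns cancel against
   det(x_j^(i-1)) = x_2 ... x_(n+1) det(x_(j+1)^(i-1)) when x_1 = 0. *)

From HB Require Import structures.
From mathcomp Require Import all_boot all_order all_algebra.
From mathcomp Require Import ring.
Import Order.TTheory GRing.Theory Num.Theory.
Set Implicit Arguments.
Unset Strict Implicit.
Unset Printing Implicit Defensive.

Local Open Scope ring_scope.

Section Recurrence.
Variable R : realFieldType.
Implicit Types (lam mu : nat -> R) (k : nat) (x : R).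

Lemma QQ_fstS lam mu k : (QQ lam mu k.+1).1 = Qpol lam mu k.
Proof. by rewrite /Qpol /=; case: (QQ lam mu k). Qed.

Lemma horner_QpolS lam mu k x : (Qpol lam mu k.+1).[x] =
  (lam k)^-1 * ((lam k + mu k - x) * (Qpol lam mu k).[x]
                - mu k * ((QQ lam mu k).1).[x]).
Proof. by rewrite /Qpol /=; case: (QQ lam mu k) => a b; rewrite !hornerE. Qed.

Lemma piw0 lam mu : piw lam mu 0 = 1.
Proof. by rewrite /piw big_geq. Qed.

Lemma piwS lam mu k : piw lam mu k.+1 = piw lam mu k * (lam k / mu k.+1).
Proof. by rewrite /piw big_nat_recr. Qed.

Lemma hatpiw0 lam mu : hatpiw lam mu 0 = 1.
Proof. by rewrite /hatpiw big_geq. Qed.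

Lemma hatpiwS lam mu k :
  hatpiw lam mu k.+1 = hatpiw lam mu k * (mu k.+1 / lam k.+1).
Proof. by rewrite /hatpiw big_nat_recr. Qed.

Variables lam mu : nat -> R.
Hypothesis lam_neq0 : forall k, lam k != 0.
Hypothesis mu0 : mu 0 = 0.
Hypothesis muS_neq0 : forall k, mu k.+1 != 0.

Lemma horner_Qpol0 k : (Qpol lam mu k).[0] = 1.
Proof.
suff [] : (Qpol lam mu k).[0] = 1 /\ mu k * ((QQ lam mu k).1).[0] = mu k by [].
elim: k => [|k [Qk0 muQ0]]; first by rewrite mu0 !hornerE.
by rewrite QQ_fstS horner_QpolS Qk0 muQ0 !mulr1 subr0 addrK mulVf.
Qed.

(* Summing the recurrence with the weights pi_j telescopes, because
   pi_j lam_j = pi_(j+1) mu_(j+1) and mu_0 = 0. *)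
Lemma piw_Qpol_diff x k :
  piw lam mu k * lam k * ((Qpol lam mu k.+1).[x] - (Qpol lam mu k).[x]) =
  - x * \sum_(j < k.+1) piw lam mu j * (Qpol lam mu j).[x].
Proof.
elim: k => [|k IHk].
  by rewrite big_ord1 piw0 horner_QpolS mu0 /=; field.
rewrite big_ord_recr /= [RHS]mulrDr -IHk horner_QpolS QQ_fstS piwS.
by field; rewrite lam_neq0 muS_neq0.
Qed.

Lemma horner_hatQpol x k :
  (hatQpol lam mu k).[x] = \sum_(j < k.+1) piw lam mu j * (Qpol lam mu j).[x].
Proof.
rewrite /hatQpol.
suff [] : (Qpol (fun j => mu j.+1) lam k).[x] =
            \sum_(j < k.+1) piw lam mu j * (Qpol lam mu j).[x] /\
          ((QQ (fun j => mu j.+1) lam k).1).[x] =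
            \sum_(j < k) piw lam mu j * (Qpol lam mu j).[x] by [].
elim: k => [|k [IH1 IH2]]; first by rewrite big_ord1 big_ord0 piw0 !hornerE.
rewrite QQ_fstS IH1; split=> //.
rewrite horner_QpolS IH1 IH2 (big_ord_recr k.+1) /=.
set S := \sum_(j < k.+1) _.
have Sk : \sum_(j < k) piw lam mu j * (Qpol lam mu j).[x] =
          S - piw lam mu k * (Qpol lam mu k).[x] by rewrite /S big_ord_recr addrK.
have xS : x * S = - (piw lam mu k * lam k *
                     ((Qpol lam mu k.+1).[x] - (Qpol lam mu k).[x])).
  by rewrite piw_Qpol_diff mulNr opprK.
rewrite Sk mulrBl xS piwS.
by field; rewrite muS_neq0.
Qed.

Lemma piw_lam_hatpiw k : piw lam mu k * lam k * hatpiw lam mu k = lam 0.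
Proof.
elim: k => [|k IHk]; first by rewrite piw0 hatpiw0 mul1r mulr1.
by rewrite piwS hatpiwS -IHk; field; rewrite lam_neq0 muS_neq0.
Qed.

Lemma horner_Qpol_diff x k :
  (Qpol lam mu k.+1).[x] - (Qpol lam mu k).[x] =
  - (hatpiw lam mu k / lam 0) * (x * (hatQpol lam mu k).[x]).
Proof.
have : piw lam mu k * lam k * hatpiw lam mu k != 0 by rewrite piw_lam_hatpiw.
rewrite !mulf_eq0 !negb_or => /andP[/andP[pi_neq0 lam_k_neq0] hatpi_neq0].
rewrite -(piw_lam_hatpiw k); apply: (mulfI (mulf_neq0 pi_neq0 lam_k_neq0)).
rewrite piw_Qpol_diff horner_hatQpol.
by field; rewrite pi_neq0 lam_k_neq0 hatpi_neq0.
Qed.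

End Recurrence.

Section Determinants.
Variable R : comNzRingType.

Lemma det_sum_rows m M (c : 'I_m -> 'I_M -> R) (P : 'I_M -> 'I_m -> R)
    (window : 'I_m -> pred 'I_M) :
  \det (\matrix_(i, j) \sum_(k | window i k) c i k * P k j) =
  \sum_(f : {ffun 'I_m -> 'I_M} | [forall i, window i (f i)])
     (\prod_i c i (f i)) * \det (\matrix_(i, j) P (f i) j).
Proof.
rewrite /determinant.
under eq_bigr => s _.
  under eq_bigr => i _ do rewrite mxE.
  rewrite bigA_distr_big_dep mulr_sumr.
  over.
rewrite exchange_big /=.
apply: eq_big => [f|f _]; first by apply/familyP/forallP => f_win i; have := f_win i.
rewrite mulr_sumr; apply: eq_bigr => s _.
rewrite big_split /=.
under [in X in _ = _ * (_ * X)]eq_bigr => i _ do rewrite mxE.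
by rewrite mulrCA.
Qed.

Lemma det_successive_differences m (G : nat -> 'I_m -> R) :
  \det (\matrix_(i < m, j < m) G i j) =
  \det (\matrix_(i < m, j < m)
          (G i j - if nat_of_ord i is l.+1 then G l j else 0)).
Proof.
pose prev (l : nat) j := if l is l'.+1 then G l' j else 0.
set D := (X in _ = \det X).
have -> : \matrix_(i < m, j < m) G i j = \matrix_(i, l) ((l <= i)%N)%:R *m D.
  apply/matrixP => i j; rewrite !mxE.
  transitivity (\sum_(0 <= l < i.+1) (prev l.+1 j - prev l j)).
    by rewrite telescope_sumr // subr0.
  rewrite (big_nat_widen _ _ m) // big_mkord big_mkcond /=.
  by apply: eq_bigr => l _; rewrite !mxE ltnS; case: leqP; rewrite ?mul1r ?mul0r.
rewrite det_mulmx det_trig ?big1 ?mul1r // => [i _|]; first by rewrite mxE leqnn.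
by apply/is_trig_mxP => i j ij; rewrite mxE leqNgt ij.
Qed.

Lemma det_col0_delta n (A : 'M[R]_n.+1) :
  (forall i, A i ord0 = (i == ord0)%:R) ->
  \det A = \det (\matrix_(i, j) A (lift ord0 i) (lift ord0 j)).
Proof.
move=> A0; rewrite (expand_det_col _ ord0) big_ord_recl big1 ?addr0; last first.
  by move=> i _; rewrite A0 mul0r.
rewrite A0 eqxx mul1r /cofactor /= expr0 mul1r.
by congr (\det _); apply/matrixP => i j; rewrite !mxE.
Qed.

Lemma det_successive_differences_col0 n (G : nat -> 'I_n.+1 -> R) :
  (forall l, G l ord0 = 1) ->
  \det (\matrix_(i < n.+1, j < n.+1) G i j) =
  \det (\matrix_(i < n, j < n) (G i.+1 (lift ord0 j) - G i (lift ord0 j))).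
Proof.
move=> G0; rewrite det_successive_differences det_col0_delta; last first.
  by case=> [[|l] ?]; rewrite mxE G0 /= ?G0 ?subr0 ?subrr.
by congr (\det _); apply/matrixP => i j; rewrite !mxE.
Qed.

Lemma det_scale_cols m (d : 'I_m -> R) (A : 'I_m -> 'I_m -> R) :
  \det (\matrix_(i, j) (d j * A i j)) = \det (\matrix_(i, j) A i j) * \prod_j d j.
Proof.
have -> : \matrix_(i, j) (d j * A i j) = \matrix_(i, j) A i j *m diag_mx (\row_j d j).
  by rewrite mul_mx_diag; apply/matrixP => i j; rewrite !mxE mulrC.
by rewrite det_mulmx det_diag; congr (_ * _); apply: eq_bigr => i _; rewrite mxE.
Qed.

Lemma det_vandermonde_root0 n (x : 'I_n.+1 -> R) : x ord0 = 0 ->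
  \det (\matrix_(i < n.+1, j < n.+1) x j ^+ i) =
  \det (\matrix_(i < n, j < n) x (lift ord0 j) ^+ i) * \prod_j x (lift ord0 j).
Proof.
move=> x0; rewrite (expand_det_col _ ord0) big_ord_recl big1 ?addr0; last first.
  by move=> i _; rewrite mxE x0 lift0 expr0n mul0r.
rewrite mxE expr0 mul1r /cofactor /= expr0 mul1r -det_scale_cols.
by congr (\det _); apply/matrixP => i j; rewrite !mxE lift0 exprS.
Qed.

End Determinants.

Lemma sum_window_telescope (V : zmodType) M a b (F : nat -> V) :
  (a <= b <= M)%N -> \sum_(k < M | (a <= k < b)%N) (F k.+1 - F k) = F b - F a.
Proof.
case/andP=> ab bM; rewrite -telescope_sumr // (big_nat_widenl _ 0 _ _ _ (leq0n a)).
by rewrite (big_nat_widen _ _ M) // big_mkord.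
Qed.

Lemma inW_lt n (v : 'I_n -> nat) (i j : 'I_n) : inW v -> (i < j)%N -> (v i < v j)%N.
Proof. by move=> /forallP/(_ i)/forallP/(_ j)/implyP. Qed.

Lemma inW_le n (v : 'I_n -> nat) (i j : 'I_n) :
  inW v -> (i <= j)%N -> (v i <= v j)%N.
Proof.
move=> v_inc; rewrite leq_eqVlt => /orP[/eqP/val_inj-> // | ij].
exact/ltnW/inW_lt.
Qed.

Lemma inW_succ n (v : 'I_n -> nat) :
  (forall i j : 'I_n, j = i.+1 :> nat -> (v i < v j)%N) -> inW v.
Proof.
case: n v => [|n] v v_succ; apply/forallP => i; apply/forallP => j.
  by case: i.
apply/implyP => ij.
rewrite -[v i](congr1 v (inord_val i)) -[v j](congr1 v (inord_val j)).
apply: (@homo_ltn_in _ [pred l | l < n.+1]%N (fun l => v (inord l)) _ ltn_trans) => //.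
- by move=> a b _; rewrite !inE => bn c /andP[_ cb]; apply: ltn_trans bn.
- by move=> l; rewrite !inE => ln Sln; apply: v_succ; rewrite !inordK.
- by rewrite inE.
- by rewrite inE.
Qed.

Lemma interlace_up_inW n (nu : 'I_n.+1 -> nat) (k : 'I_n -> nat) :
  interlace_up nu k -> inW k.
Proof.
move/forallP=> nu_k; apply: inW_succ => i j ji.
have /andP[_ ki] := nu_k i; have /andP[kj _] := nu_k j.
apply: (leq_trans ki); suff -> : lift ord0 i = widen_ord (leqnSn n) j by [].
by apply: val_inj; rewrite /= ji.
Qed.

Lemma interlace_eq_inW n (nu k : 'I_n -> nat) : interlace_eq nu k -> inW k.
Proof.
move/forallP=> nu_k; apply: inW_succ => i j /eqP ji.
have /andP[ki /forallP/(_ j)] := nu_k i.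
by rewrite ji => /(leq_ltn_trans ki).
Qed.

Lemma interlace_eqE n (nu k : 'I_n.+1 -> nat) :
  interlace_eq nu k =
  [forall i : 'I_n.+1,
     (if nat_of_ord i is l.+1 then (nu (inord l)).+1 else 0%N) <= k i <= nu i]%N.
Proof.
apply/forallP/forallP => nu_k i.
  have /andP[-> _] := nu_k i; rewrite andbT.
  case Ei: (val i) => [|l] //.
  have ln : (l < n.+1)%N by move: (ltn_ord i); rewrite Ei ltnS => /ltnW.
  have /andP[_ /forallP/(_ i)] := nu_k (inord l).
  by rewrite Ei inordK // eqxx.
have /andP[_ ->] := nu_k i; apply/forallP => j; apply/implyP => /eqP ji.
by have /andP[] := nu_k j; rewrite ji inord_val.
Qed.

Section Expansions.
Variable R : realFieldType.
Variables lam mu : nat -> R.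
Hypothesis lam_neq0 : forall k, lam k != 0.
Hypothesis mu0 : mu 0 = 0.
Hypothesis muS_neq0 : forall k, mu k.+1 != 0.

Lemma det_hatQpol_windows n (nu : 'I_n.+1 -> nat) (x : 'I_n.+1 -> R) :
  inW nu ->
  \det (\matrix_(i, j) (hatQpol lam mu (nu i)).[x j]) =
  \det (\matrix_(i, j)
     \sum_(k < (\max_(i < n.+1) nu i).+1 |
             ((if nat_of_ord i is l.+1 then (nu (inord l)).+1 else 0) <= k <= nu i)%N)
        piw lam mu k * (Qpol lam mu k).[x j]).
Proof.
move=> nu_inc; set M := (\max_(i < n.+1) nu i).+1.
pose F j t := \sum_(k < t) piw lam mu k * (Qpol lam mu k).[x j].
pose hi l := (nu (inord l)).+1.
pose lo l := if l is l'.+1 then hi l' else 0%N.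
have window (i : 'I_n.+1) : (lo i <= hi i <= M)%N.
  rewrite /hi inord_val ltnS (leq_bigmax i) andbT.
  case: i => [[|l] li] //=; rewrite ltnS; apply: inW_le => //.
  by rewrite inordK // ltnW.
have -> : \matrix_(i, j) (hatQpol lam mu (nu i)).[x j] =
          \matrix_(i < n.+1, j < n.+1) F j (hi i).
  by apply/matrixP => i j; rewrite !mxE horner_hatQpol // /hi inord_val.
rewrite (det_successive_differences (fun l j => F j (hi l))).
congr (\det _); apply/matrixP => i j; rewrite !mxE.
have -> : (if nat_of_ord i is l.+1 then F j (hi l) else 0) = F j (lo i).
  by case: (nat_of_ord i) => [|l]; rewrite /F ?big_ord0.
rewrite -(sum_window_telescope (M := M)) // /hi inord_val.
by apply: eq_bigr => k _; rewrite /F big_ord_recr addrAC subrr add0r.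
Qed.

Lemma detratio_hatQpol_interlace_eq n (nu : 'I_n.+1 -> nat) (x : 'I_n.+1 -> R) :
  inW nu ->
  detratio (hatQpol lam mu) nu x =
  \sum_(k : {ffun 'I_n.+1 -> 'I_(\max_(i < n.+1) nu i).+1} |
          inW (fun i => nat_of_ord (k i)) &&
          interlace_eq nu (fun i => nat_of_ord (k i)))
     (\prod_(i < n.+1) piw lam mu (k i)) *
     detratio (Qpol lam mu) (fun i => nat_of_ord (k i)) x.
Proof.
move=> nu_inc; rewrite /detratio det_hatQpol_windows //.
rewrite (det_sum_rows (fun _ k => piw lam mu k) (fun k j => (Qpol lam mu k).[x j])).
rewrite mulr_suml; apply: eq_big => [f|f _]; last by rewrite mulrA.
rewrite andb_idl; last exact: interlace_eq_inW.
by rewrite interlace_eqE.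
Qed.

Lemma det_Qpol_windows_root0 n (nu : 'I_n.+1 -> nat) (x : 'I_n.+1 -> R) :
  inW nu -> x ord0 = 0 ->
  \det (\matrix_(i, j) (Qpol lam mu (nu i)).[x j]) =
  \det (\matrix_(i < n, j < n)
     \sum_(k < (nu ord_max).+1 |
             (nu (widen_ord (leqnSn n) i) <= k < nu (lift ord0 i))%N)
        - (hatpiw lam mu k / lam 0) *
          (x (lift ord0 j) * (hatQpol lam mu k).[x (lift ord0 j)])).
Proof.
move=> nu_inc x0.
have inord_widen (i : 'I_n) : inord i = widen_ord (leqnSn n) i.
  by apply: val_inj; rewrite /= inordK // ltnW // ltnS.
have inord_lift (i : 'I_n) : inord i.+1 = lift ord0 i.
  by apply: val_inj; rewrite /= inordK ?ltnS // /bump add1n.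
have -> : \matrix_(i, j) (Qpol lam mu (nu i)).[x j] =
          \matrix_(i < n.+1, j < n.+1) (Qpol lam mu (nu (inord i))).[x j].
  by apply/matrixP => i j; rewrite !mxE inord_val.
rewrite (det_successive_differences_col0
           (G := fun l j => (Qpol lam mu (nu (inord l))).[x j])); last first.
  by move=> l; rewrite x0 horner_Qpol0.
congr (\det _); apply/matrixP => i j; rewrite !mxE inord_lift inord_widen.
rewrite -(sum_window_telescope (M := (nu ord_max).+1)
                              (fun k => (Qpol lam mu k).[x (lift ord0 j)])).
  by apply: eq_bigr => k _; rewrite horner_Qpol_diff.
rewrite inW_le //=.
by apply/leqW/inW_le => //; apply: leq_ord.
Qed.

Lemma detratio_Qpol_interlace_up n (nu : 'I_n.+1 -> nat) (x : 'I_n.+1 -> R) :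
  inW nu -> injective x -> x ord0 = 0 ->
  detratio (Qpol lam mu) nu x =
  (-1) ^+ n / lam 0%N ^+ n *
  \sum_(k : {ffun 'I_n -> 'I_(nu ord_max).+1} |
          inW (fun i => nat_of_ord (k i)) &&
          interlace_up nu (fun i => nat_of_ord (k i)))
     (\prod_(i < n) hatpiw lam mu (k i)) *
     detratio (hatQpol lam mu) (fun i => nat_of_ord (k i))
              (fun j => x (lift ord0 j)).
Proof.
move=> nu_inc x_inj x0; set y := fun j => x (lift ord0 j).
rewrite /detratio det_Qpol_windows_root0 // det_vandermonde_root0 //.
rewrite (det_sum_rows (fun _ k => - (hatpiw lam mu k / lam 0))
                      (fun k j => y j * (hatQpol lam mu k).[y j])).
rewrite mulr_suml mulr_sumr; apply: eq_big => [f|f _].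
  by rewrite andb_idl //; apply: interlace_up_inW.
rewrite (det_scale_cols y (fun i j => (hatQpol lam mu (f i)).[y j])).
have y_neq0 : \prod_j y j != 0.
  by apply/prodf_neq0 => j _; rewrite -x0 (inj_eq x_inj) eq_sym neq_lift.
have -> : \prod_i - (hatpiw lam mu (f i) / lam 0) =
          (-1) ^+ n / lam 0 ^+ n * \prod_i hatpiw lam mu (f i).
  by rewrite prodrN card_ord prodf_div prodr_const card_ord mulrCA [LHS]mulrC.
rewrite -[\prod_j x _]/(\prod_j y j) -[\matrix_(i, j) x _ ^+ i]/(\matrix_(i, j) y j ^+ i).
rewrite -!mulrA; congr (_ * (_ * (_ * (_ * _)))).
by rewrite invfM mulrCA divff ?mulr1.
Qed.

End Expansions.

(* The sums over W^{n,n+1}(nu) and W^{n,n}(nu) range over k : 'I_n -> 'I_M with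
   M = nu_{n+1} + 1 (resp. max_i nu_i + 1); all interlacing k have entries < M. *)
Theorem proposition7p1 (R : realFieldType) (lam mu : nat -> R)
  (hlam : forall k, 0 < lam k) (hmu0 : mu 0%N = 0)
  (hmu : forall k, (0 < k)%N -> 0 < mu k) (n : nat) (hn : (1 <= n)%N) :
  (forall (nu : 'I_n.+1 -> nat), inW nu ->
   forall x : 'I_n.+1 -> R, injective x -> x ord0 = 0 ->
     detratio (Qpol lam mu) nu x =
     (-1) ^+ n / lam 0%N ^+ n *
     \sum_(k : {ffun 'I_n -> 'I_(nu ord_max).+1} |
             inW (fun i => nat_of_ord (k i)) &&
             interlace_up nu (fun i => nat_of_ord (k i)))
        (\prod_(i < n) hatpiw lam mu (k i)) *
        detratio (hatQpol lam mu) (fun i => nat_of_ord (k i))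
                 (fun j => x (lift ord0 j)))
  /\
  (forall (nu : 'I_n -> nat), inW nu ->
   forall x : 'I_n -> R, injective x ->
     detratio (hatQpol lam mu) nu x =
     \sum_(k : {ffun 'I_n -> 'I_(\max_(i < n) nu i).+1} |
             inW (fun i => nat_of_ord (k i)) &&
             interlace_eq nu (fun i => nat_of_ord (k i)))
        (\prod_(i < n) piw lam mu (k i)) *
        detratio (Qpol lam mu) (fun i => nat_of_ord (k i)) x).
Proof.
have lam_neq0 k : lam k != 0 by rewrite gt_eqF.
have muS_neq0 k : mu k.+1 != 0 by rewrite gt_eqF ?hmu.
split=> [nu nu_inc x x_inj x0 | ].
  exact: detratio_Qpol_interlace_up.
case: n hn => // n _ nu nu_inc x _.
exact: detratio_hatQpol_interlace_eq.
Qed.
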